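(* Let $R$ be a simple path in $T$ with consecutive vertices $r_1,\dots,r_m$, let $k$ be an integer with $2\le k\le m$, put $N=m-k+1$, and for $j=1,\dots,N$ let $P_j$ be the path $r_j,\dots,r_{j+k-1}$. Assume $|P_j|=l$ for all $j$. Then $\min_{1\le j\le N}\overline{S}(P_j)=\min\{\overline{S}(P_1),\overline{S}(P_N)\}$, i.e. the minimum of the mean service time over these shifted paths is attained at one of the two extreme positions.
   Context: Let $T=(V,E)$ be a finite tree with vertex set $V=\{v_1,\dots,v_n\}$ and positive edge lengths; $d(x,y)$ denotes the length of the unique path in $T$ between vertices $x,y$. Each vertex $v_i$ has a weight $w_i\ge 0$ with $w(T)=\sum_i w_i=1$. A path $P$ is the vertex sequence $p(1),\dots,p(k)$ of a simple path in $T$; $|P|=d(p(1),p(k))$. For $v\in V$, $p_P(v)$ denotes the unique vertex of $P$ closest to $v$. For a vertex $p$ of $P$, the branch $T_p$ (with respect to $P$) is the set of vertices $v$ with $p_P(v)=p$, and $w_{T_p}=\sum_{v_i\in T_p}w_i$. For a vertex $p$ of $P$ put $\overline{d}_P(p)=\sum_{j=1}^k w_{T_{p(j)}}\,d(p(j),p)$. Fix a speed $v_t>0$ and a constant $\overline{G}\ge0$. Define $\overline{T}_2(P)=\frac{1}{v_t}\sum_i w_i\,\overline{d}_P(p_P(v_i))$ and $\overline{S}(P)=\overline{T}_2(P)+\overline{G}$. *)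

From HB Require Import structures.
From mathcomp Require Import all_boot all_order all_algebra.
From Stdlib Require Import ClassicalEpsilon.
Set Implicit Arguments. Unset Strict Implicit. Unset Printing Implicit Defensive.
Import Order.TTheory GRing.Theory Num.Theory.
Local Open Scope ring_scope.

Section TreeDefs.
Variables (R : realFieldType) (T : finType).
Variable e : rel T.
Variable len : T -> T -> R.

Definition simple_path (x : T) (p : seq T) : bool := path e x p && uniq (x :: p).

Definition is_tree : Prop :=
  symmetric e /\ irreflexive e /\
  (forall x y : T, exists p, simple_path x p /\ last x p = y) /\
  (forall x p q, simple_path x p -> simple_path x q -> last x p = last x q -> p = q).

Definition pos_lengths : Prop :=
  (forall x y, e x y -> 0 < len x y) /\ (forall x y, len x y = len y x).

Fixpoint walk_len (x : T) (p : seq T) : R :=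
  if p is y :: p' then len x y + walk_len y p' else 0.

Definition tpath (x y : T) : seq T :=
  epsilon (inhabits [::]) (fun p => simple_path x p /\ last x p = y).

Definition dist (x y : T) : R := walk_len x (tpath x y).

(* path P given as its vertex sequence p(1),...,p(k) *)
Definition plen (P : seq T) : R :=
  if P is x :: _ then dist x (last x P) else 0.

Definition proj (P : seq T) (v : T) : T :=
  [arg min_(u < head v P in P) dist v u]%O.

Definition branch_w (w : T -> R) (P : seq T) (p : T) : R :=
  \sum_(v : T | proj P v == p) w v.

Definition dbar (w : T -> R) (P : seq T) (p : T) : R :=
  \sum_(q <- P) branch_w w P q * dist q p.

Definition T2bar (w : T -> R) (vt : R) (P : seq T) : R :=
  vt^-1 * \sum_(v : T) w v * dbar w P (proj P v).

Definition Sbar (w : T -> R) (vt G : R) (P : seq T) : R := T2bar w vt P + G.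

End TreeDefs.

(* P_j (0-based j) = r_{j+1}, ..., r_{j+k} *)
Definition subpath (T : Type) (r : seq T) (k j : nat) : seq T := take k (drop j r).

(* Number the vertices of R as r_0, ..., r_n, let pos t be the length of the
   prefix r_0 ... r_t, and let c v be the index of the vertex of R nearest to v.
   In a tree the path from v to r_a passes through r_(c v), so the vertex of the
   window P_j nearest to v is r_(c v) clamped to the window, and distances between
   such projections are distances on a line.  Hence vt * T2bar(P_j) is the sum,
   over the edges (t, t+1) of the window, of (pos (t+1) - pos t) * gini (L t),
   where L t is the weight of the vertices with c v <= t and gini x = 2x(1-x)
   is the weight of the pairs separated by the edge.  Shifting the window drops
   the edge j and adds the edge j+k-1; these have equal length because
   |P_j| = |P_(j+1)|, so the cost changes by a multiple of
   gini (L (j+k-1)) - gini (L j), whose sign is that of 1 - L j - L (j+k-1).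
   That quantity decreases with j: once the cost falls it never rises again,
   so its minimum is attained at an end. *)

From HB Require Import structures.
From mathcomp Require Import all_boot all_order all_algebra.
From mathcomp Require Import zify ring lra.
From Stdlib Require Import ClassicalEpsilon.
Import Order.TTheory GRing.Theory Num.Theory.
Local Open Scope ring_scope.

Section Line.
Context {R : realDomainType}.

Lemma le_of_steps (F : nat -> R) (a b : nat) : (a <= b)%N ->
  (forall t, (a <= t < b)%N -> F t <= F t.+1) -> F a <= F b.
Proof.
move=> ab step; rewrite -subr_ge0 -telescope_sumr // big_seq.
by apply: sumr_ge0 => t; rewrite mem_index_iota subr_ge0; apply: step.
Qed.

Lemma min_ends_le (F : nat -> R) (n : nat) :
  (forall i i', (i < i' < n)%N -> F i.+1 < F i -> F i'.+1 <= F i') ->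
  forall j, (j <= n)%N -> Num.min (F 0%N) (F n) <= F j.
Proof.
move=> no_valley j jn; rewrite ge_min.
have [[i ij fall] | rise] :=
  altP (@hasP _ (fun i => F i.+1 < F i) (iota 0 j)).
- rewrite mem_iota add0n in ij.
  apply/orP; right; rewrite -lerN2.
  apply: (@le_of_steps (fun t => - F t)) => // t /andP [jt tn].
  by rewrite lerN2; apply: (no_valley i); [lia|].
- apply/orP; left; apply: le_of_steps => // t /andP [_ tj].
  by rewrite leNgt; apply/(hasPn rise); rewrite mem_iota.
Qed.

Lemma sum_indicator_nat (g : nat -> R) (M a b : nat) : (b <= M)%N ->
  \sum_(t < M) ((a <= t < b)%N)%:R * g t = \sum_(a <= t < b) g t.
Proof.
move=> bM; rewrite big_geq_mkord (big_ord_widen_cond M _ _ bM) [RHS]big_mkcond.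
by apply: eq_bigr => t _; case: ifP; rewrite ?mul1r ?mul0r.
Qed.

(* The edge from [t] to [t.+1] lies between [a] and [b]. *)
Definition separates (a b t : nat) : bool := (a <= t)%N (+) (b <= t)%N.

Definition clamp (lo hi a : nat) : nat := minn (maxn a lo) hi.

Lemma separates_clamp (lo hi a b t : nat) : (lo <= hi)%N ->
  separates (clamp lo hi a) (clamp lo hi b) t = (lo <= t < hi)%N && separates a b t.
Proof. by rewrite /separates /clamp; lia. Qed.

Lemma dist_sum_separates (f : nat -> R) (M a b : nat) :
  (forall t, (t < M)%N -> f t <= f t.+1) -> (a <= M)%N -> (b <= M)%N ->
  `|f a - f b| = \sum_(t < M) (separates a b t)%:R * (f t.+1 - f t).
Proof.
move=> f_mono; wlog ab : a b / (a <= b)%N => [sym|] aM bM.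
  have [/sym -> //|/ltnW ba] := leqP a b.
  by rewrite distrC sym //; apply: eq_bigr => t _; rewrite /separates addbC.
have -> : \sum_(t < M) (separates a b t)%:R * (f t.+1 - f t) =
          \sum_(t < M) ((a <= t < b)%N)%:R * (f t.+1 - f t).
  by apply: eq_bigr => t _; rewrite /separates; congr (_%:R * _); lia.
rewrite (sum_indicator_nat (fun t => f t.+1 - f t)) // telescope_sumr //.
rewrite distrC ger0_norm // subr_ge0.
by apply: le_of_steps => // t /andP [_ tb]; apply: f_mono; lia.
Qed.

Definition gini (x : R) : R := 2 * x * (1 - x).

(* [gini y - gini x = 2 (y - x) (1 - x - y)]: a fall forces [x + y > 1], which
   persists when both arguments move up. *)
Lemma gini_step_nonpos (d a b d' a' b' : R) :
  0 <= d -> 0 <= d' -> a <= b -> a' <= b' -> a <= a' -> b <= b' ->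
  d * (gini b - gini a) < 0 -> d' * (gini b' - gini a') <= 0.
Proof.
have giniB x y : gini y - gini x = 2 * (y - x) * (1 - x - y) by rewrite /gini; ring.
rewrite !giniB => d_ge0 d'_ge0 ab a'b' aa' bb' fall.
have heavy : 1 < a + b.
  rewrite ltNge; apply/negP => light; move: fall; apply/negP; rewrite -leNgt.
  by rewrite !mulr_ge0 //; lra.
by rewrite mulr_ge0_le0 // mulr_ge0_le0 //; lra.
Qed.

End Line.

Section WindowCost.
Context {R : realDomainType} {I : finType}.
Variables (w : I -> R) (c : I -> nat).
Variables (pos : nat -> R) (n h : nat) (l : R).
Hypothesis pos_mono : forall t, (t < n)%N -> pos t <= pos t.+1.
Hypothesis w_sum : \sum_(u : I) w u = 1.

(* [vt * T2bar] of the window [j, j + h] for the points [c u] placed at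
   [pos (c u)] on a line; see [T2bar_subpath]. *)
Definition window_cost (j : nat) : R :=
  \sum_(v : I) \sum_(u : I) w v * w u *
    `|pos (clamp j (j + h) (c u)) - pos (clamp j (j + h) (c v))|.

Definition mass_below (t : nat) : R := \sum_(u : I) w u * (c u <= t)%:R.

Definition cut_weight (t : nat) : R :=
  \sum_(v : I) \sum_(u : I) w v * w u * (separates (c u) (c v) t)%:R.

Definition edge_gain (t : nat) : R := (pos t.+1 - pos t) * cut_weight t.

Lemma cut_weightE t : cut_weight t = gini (mass_below t).
Proof.
have term v u : w v * w u * (separates (c u) (c v) t)%:R =
    w v * (w u * (c u <= t)%:R) + w v * (c v <= t)%:R * w u
    - 2 * (w v * (c v <= t)%:R) * (w u * (c u <= t)%:R).
  by rewrite /separates; case: (c u <= t)%N; case: (c v <= t)%N => /=; ring.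
rewrite /cut_weight; under eq_bigr => v _ do
  rewrite (eq_bigr _ (fun u _ => term v u)) sumrB big_split /= -!mulr_sumr w_sum.
rewrite sumrB big_split /= -!mulr_suml w_sum -mulr_sumr -/(mass_below t) /gini.
ring.
Qed.

Lemma window_costE j : (j + h <= n)%N ->
  window_cost j = \sum_(j <= t < j + h) edge_gain t.
Proof.
move=> jh; rewrite -(@sum_indicator_nat _ edge_gain _ j _ jh) /window_cost.
have clamp_le a : (clamp j (j + h) a <= n)%N by rewrite /clamp; lia.
under eq_bigr => v _ do under eq_bigr => u _ do
  rewrite (@dist_sum_separates _ pos _ _ _ pos_mono) // mulr_sumr.
under eq_bigr => v _ do rewrite exchange_big.
rewrite exchange_big; apply: eq_bigr => t _ /=.
rewrite /edge_gain /cut_weight !mulr_sumr; apply: eq_bigr => v _.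
rewrite !mulr_sumr; apply: eq_bigr => u _.
by rewrite separates_clamp ?leq_addr // -mulnb natrM; ring.
Qed.

Lemma window_cost_step j : (j + h < n)%N ->
  window_cost j.+1 = window_cost j + (edge_gain (j + h) - edge_gain j).
Proof.
move=> jh; rewrite !window_costE ?addSn //; last exact: ltnW.
rewrite -[LHS](addKr (edge_gain j)) -big_ltn ?ltnS ?leq_addr //.
by rewrite big_nat_recr ?leq_addr //=; ring.
Qed.

Hypothesis w_ge0 : forall u, 0 <= w u.
Hypothesis window_len : forall j, (j + h <= n)%N -> pos (j + h) - pos j = l.

Lemma mass_below_mono : {homo mass_below : s t / (s <= t)%N >-> s <= t}.
Proof.
move=> s t st; apply: ler_sum => u _; apply: ler_wpM2l => //.
by rewrite ler_nat; lia.
Qed.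

Lemma edge_shift i : (i + h < n)%N -> pos (i + h).+1 - pos (i + h) = pos i.+1 - pos i.
Proof.
move=> ih; have := window_len i (ltnW ih); have := window_len i.+1.
by rewrite addSn => /(_ ih); lra.
Qed.

Lemma window_cost_min_ends j : (j <= n - h)%N ->
  Num.min (window_cost 0) (window_cost (n - h)) <= window_cost j.
Proof.
apply: min_ends_le => i i' /andP [ii' i'n].
rewrite !window_cost_step /edge_gain ?cut_weightE ?edge_shift -?mulrBr; try lia.
rewrite gtrDl gerDl; apply: gini_step_nonpos;
  by rewrite ?subr_ge0 ?pos_mono ?mass_below_mono //; lia.
Qed.

End WindowCost.

Section Tree.
Context {R : realFieldType} {T : finType}.
Variables (e : rel T) (len : T -> T -> R).
Hypothesis tree : is_tree e.
Hypothesis lengths : pos_lengths e len.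

Lemma tpath_spec x y : simple_path e x (tpath e x y) /\ last x (tpath e x y) = y.
Proof.
apply: (epsilon_spec (inhabits [::]) (fun p => simple_path e x p /\ last x p = y)).
by case: tree => _ [_ []].
Qed.

Lemma tpath_simple {x p} : simple_path e x p -> tpath e x (last x p) = p.
Proof.
move=> xp; have [tp tp_last] := tpath_spec x (last x p).
by case: tree => _ [_ [_ uniq_paths]]; apply: uniq_paths tp xp tp_last.
Qed.

Lemma dist_simple_path {x p} : simple_path e x p -> dist e len x (last x p) = walk_len len x p.
Proof. by move=> xp; rewrite /dist tpath_simple. Qed.

Lemma walk_len_cat x p q :
  walk_len len x (p ++ q) = walk_len len x p + walk_len len (last x p) q.
Proof. by elim: p x => [|y p IH] x /=; rewrite ?add0r // IH addrA. Qed.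

Lemma walk_len_gt0 {x p} : path e x p -> p != [::] -> 0 < walk_len len x p.
Proof.
have edge_gt0 y z : e y z -> 0 < len y z by case: lengths => + _; apply.
suff walk_ge0 y q : path e y q -> 0 <= walk_len len y q.
  case: p => [|y p] //= /andP [xy yp] _.
  by have := walk_ge0 _ _ yp; have := edge_gt0 _ _ xy; lra.
elim: q y => [|z q IH] y //= /andP [yz zq].
by have := IH _ zq; have := edge_gt0 _ _ yz; lra.
Qed.

Lemma last_rev_belast (x : T) (p : seq T) : last (last x p) (rev (belast x p)) = x.
Proof. by case: p => [|y p] //=; rewrite rev_cons last_rcons. Qed.

Lemma walk_len_rev x p :
  walk_len len (last x p) (rev (belast x p)) = walk_len len x p.
Proof.
elim: p x => [|y p IH] x //=.
rewrite rev_cons -cats1 walk_len_cat IH /= last_rev_belast.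
by case: lengths => _ ->; ring.
Qed.

Lemma simple_path_rev {x p} :
  simple_path e x p -> simple_path e (last x p) (rev (belast x p)).
Proof.
case: tree => e_sym _ /andP [xp xp_uniq]; apply/andP; split.
  by rewrite rev_path (@eq_path _ _ e) // => a b /=; apply: e_sym.
by rewrite -rev_rcons -lastI rev_uniq.
Qed.

Lemma distC x y : dist e len x y = dist e len y x.
Proof.
have [xy xy_last] := tpath_spec x y.
have := dist_simple_path (simple_path_rev xy).
by rewrite last_rev_belast walk_len_rev xy_last.
Qed.

Lemma simple_path_cat {x p q} :
  simple_path e x p -> simple_path e (last x p) q ->
  (forall z, z \in x :: p -> z \in q -> z = last x p) ->
  simple_path e x (p ++ q).
Proof.
move=> /andP [xp xp_uniq] /andP [pq /= /andP [last_q q_uniq]] meet.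
apply/andP; split; first by rewrite cat_path xp.
rewrite -cat_cons cat_uniq xp_uniq q_uniq andbT; apply/hasPn => z zq.
by apply/negP => /meet /(_ zq) zl; move: last_q; rewrite -zl zq.
Qed.

Lemma projP {P : seq T} v : P != [::] ->
  proj e len P v \in P /\ forall u, u \in P -> dist e len v (proj e len P v) <= dist e len v u.
Proof.
case: P => [|x s] // _; rewrite /proj /=.
by case: arg_minP; [exact: mem_head | move=> y yP y_min; split].
Qed.

Lemma dbarE w P p : uniq P -> (forall u, proj e len P u \in P) ->
  dbar e len w P p = \sum_(u : T) w u * dist e len (proj e len P u) p.
Proof.
move=> P_uniq proj_in; rewrite /dbar /branch_w.
under eq_bigr => q _ do rewrite big_mkcond mulr_suml /=.
rewrite exchange_big /=; apply: eq_bigr => u _.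
rewrite (bigD1_seq (proj e len P u)) //= eqxx big1 ?addr0 // => q.
by rewrite eq_sym => /negbTE ->; rewrite mul0r.
Qed.

Section Spine.
Variables (x0 : T) (p0 : seq T).
Hypothesis spine : simple_path e x0 p0.

Local Notation r := (x0 :: p0).
Local Notation n := (size p0).
Local Notation rr t := (nth x0 (x0 :: p0) t).

Definition prefix_len (t : nat) : R := \sum_(s < t) len (rr s) (rr s.+1).

Lemma spine_uniq : uniq r.
Proof. by case/andP: spine. Qed.

Lemma spine_edge t : (t < n)%N -> e (rr t) (rr t.+1).
Proof. by case/andP: spine => /(pathP x0) + _; apply. Qed.

Lemma prefix_lenS t : prefix_len t.+1 = prefix_len t + len (rr t) (rr t.+1).
Proof. by rewrite /prefix_len big_ord_recr. Qed.

Lemma prefix_len_lt {a b} : (a < b)%N -> (b <= n)%N -> prefix_len a < prefix_len b.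
Proof.
elim: b => [|b IH] // ab bn; rewrite prefix_lenS.
have : 0 < len (rr b) (rr b.+1) by case: lengths => + _; apply; apply: spine_edge.
move: ab; rewrite ltnS leq_eqVlt => /orP [/eqP ->|/IH /(_ (ltnW bn))]; lra.
Qed.

Lemma prefix_len_le {a b} : (a <= b)%N -> (b <= n)%N -> prefix_len a <= prefix_len b.
Proof.
by rewrite leq_eqVlt => /orP [/eqP -> //| ab] bn; apply/ltW/prefix_len_lt.
Qed.

Definition spine_seg (i d : nat) : seq T := [seq rr t | t <- iota i.+1 d].

Lemma spine_segP {i d} : (i + d <= n)%N ->
  [/\ path e (rr i) (spine_seg i d), last (rr i) (spine_seg i d) = rr (i + d)
    & walk_len len (rr i) (spine_seg i d) = prefix_len (i + d) - prefix_len i].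
Proof.
elim: d i => [|d IH] i id; first by rewrite /spine_seg /= addn0 subrr.
have [seg_path seg_last seg_len] := IH i.+1 ltac:(lia).
rewrite /spine_seg /= -/(spine_seg i.+1 d) spine_edge ?seg_path ?seg_last ?seg_len; last lia.
by split; rewrite // addSnnS // prefix_lenS; ring.
Qed.

Lemma spine_seg_simple {i d} : (i + d <= n)%N -> simple_path e (rr i) (spine_seg i d).
Proof.
move=> id; have [seg_path _ _] := spine_segP id; rewrite /simple_path seg_path.
rewrite -[rr i :: _]/(map (fun t => rr t) (iota i d.+1)) map_inj_in_uniq ?iota_uniq //.
move=> a b; rewrite !mem_iota => ai bi /eqP.
by rewrite nth_uniq ?spine_uniq /=; [move/eqP | lia | lia | ].
Qed.

Lemma spine_seg_sub i d : {subset spine_seg i d <= r}.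
Proof.
move=> z /mapP [t _ ->]; have [tn|nt] := ltnP t (size r); first exact: mem_nth.
by rewrite nth_default // mem_head.
Qed.

Lemma dist_spine_le a b : (a <= b)%N -> (b <= n)%N ->
  dist e len (rr a) (rr b) = prefix_len b - prefix_len a.
Proof.
move=> ab bn; have abn : (a + (b - a) <= n)%N by lia.
have [_ seg_last seg_len] := spine_segP abn.
by rewrite -(subnKC ab) -seg_last dist_simple_path ?spine_seg_simple.
Qed.

Lemma dist_spine a b : (a <= n)%N -> (b <= n)%N ->
  dist e len (rr a) (rr b) = `|prefix_len a - prefix_len b|.
Proof.
move=> an bn; have [ab|ba] := leqP a b.
  by rewrite dist_spine_le // distrC ger0_norm // subr_ge0 prefix_len_le.
by rewrite distC dist_spine_le ?ger0_norm ?subr_ge0 ?prefix_len_le // ltnW.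
Qed.

Lemma spine_path_exists {a b} : (a <= n)%N -> (b <= n)%N ->
  exists s, [/\ simple_path e (rr a) s, last (rr a) s = rr b & {subset s <= r}].
Proof.
move=> an bn; have [ab|/ltnW ba] := leqP a b.
  have abn : (a + (b - a) <= n)%N by lia.
  have [_ seg_last _] := spine_segP abn; rewrite subnKC // in seg_last.
  by exists (spine_seg a (b - a)); split; [apply: spine_seg_simple | | apply: spine_seg_sub].
have ban : (b + (a - b) <= n)%N by lia.
have [_ seg_last _] := spine_segP ban; rewrite subnKC // in seg_last.
have seg := spine_seg_simple ban.
exists (rev (belast (rr b) (spine_seg b (a - b)))); split.
- by have := simple_path_rev seg; rewrite seg_last.
- by rewrite -seg_last last_rev_belast.
- move=> z; rewrite mem_rev => /mem_belast; rewrite inE => /orP [/eqP ->|].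
    exact: mem_nth.
  exact: spine_seg_sub.
Qed.

Definition spine_idx (v : T) : nat := index (proj e len r v) r.

Lemma spine_idx_le v : (spine_idx v <= n)%N.
Proof. by rewrite -ltnS /spine_idx index_mem; case: (@projP r v isT). Qed.

Lemma nth_spine_idx v : rr (spine_idx v) = proj e len r v.
Proof. by rewrite nth_index //; case: (@projP r v isT). Qed.

(* A later meeting point would be strictly closer to [v] than the projection. *)
Lemma tpath_to_spine_meet v z :
  z \in v :: tpath e v (proj e len r v) -> z \in r -> z = proj e len r v.
Proof.
move=> zq zr; have [_ proj_min] := @projP r v isT.
have [q_simple q_last] := tpath_spec v (proj e len r v).
move: (tpath _ _ _) zq q_simple q_last => q zq q_simple q_last.
apply/eqP; apply: contraT => z_neq.
case/splitPl: zq q_simple q_last => q1 q2 q1_last q_simple q_last.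
have q1_simple : simple_path e v q1.
  move: q_simple => /andP []; rewrite cat_path -cat_cons cat_uniq.
  by case/andP => q1_path _ /andP [q1_uniq _]; apply/andP.
have q2_path : path e z q2.
  by move: q_simple => /andP []; rewrite cat_path q1_last => /andP [].
have q2_nil : q2 != [::].
  by apply: contraNneq z_neq => q2_nil; rewrite -q_last q2_nil cats0 q1_last.
have := walk_len_gt0 q2_path q2_nil; have := proj_min z zr.
rewrite -q1_last (dist_simple_path q1_simple) -[X in dist _ _ _ X]q_last.
by rewrite (dist_simple_path q_simple) walk_len_cat; lra.
Qed.

Lemma dist_via_spine v a : (a <= n)%N ->
  dist e len v (rr a) =
  dist e len v (rr (spine_idx v)) + `|prefix_len a - prefix_len (spine_idx v)|.
Proof.
move=> an; rewrite nth_spine_idx.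
have [s [s_simple s_last s_sub]] := spine_path_exists (spine_idx_le v) an.
rewrite nth_spine_idx in s_simple s_last.
have [q_simple q_last] := tpath_spec v (proj e len r v).
have qs_simple : simple_path e v (tpath e v (proj e len r v) ++ s).
  apply: (simple_path_cat q_simple); rewrite q_last //.
  by move=> z zq /s_sub; apply: tpath_to_spine_meet.
rewrite -s_last -[in LHS]q_last -last_cat (dist_simple_path qs_simple) walk_len_cat.
rewrite -(dist_simple_path q_simple) q_last -(dist_simple_path s_simple) s_last.
by rewrite -nth_spine_idx dist_spine ?spine_idx_le // distrC.
Qed.

Lemma subpath_spine k j : (j + k <= n.+1)%N ->
  subpath r k j = [seq rr t | t <- iota j k].
Proof.
move=> jk; apply: (@eq_from_nth _ x0) => [|i].
  by rewrite size_map size_iota size_takel // size_drop /=; lia.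
rewrite size_takel ?size_drop /=; last lia.
by move=> ik; rewrite nth_take // nth_drop (nth_map 0%N) ?size_iota // nth_iota.
Qed.

Lemma clamp_unique_nearest lo hi a b : (lo <= a <= hi)%N -> (hi <= n)%N -> (b <= n)%N ->
  `|prefix_len a - prefix_len b| <= `|prefix_len (clamp lo hi b) - prefix_len b| ->
  a = clamp lo hi b.
Proof.
move=> /andP [lo_a a_hi] hi_n b_n; set cl := clamp lo hi b => nearest.
have cl_n : (cl <= n)%N by rewrite /cl /clamp; lia.
apply/eqP; apply: contraTT nearest; rewrite -ltNge.
case: ltngtP => // [a_lt|a_gt] _.
- have cl_b : (cl <= b)%N by move: a_lt; rewrite /cl /clamp; lia.
  have := prefix_len_lt a_lt cl_n; have := prefix_len_le cl_b b_n.
  by move=> ? ?; rewrite !ler0_norm; lra.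
- have b_cl : (b <= cl)%N by move: a_gt; rewrite /cl /clamp; lia.
  have := prefix_len_lt a_gt (leq_trans a_hi hi_n); have := prefix_len_le b_cl cl_n.
  by move=> ? ?; rewrite !ger0_norm; lra.
Qed.

Lemma proj_subpath k j v : (0 < k)%N -> (j + k <= n.+1)%N ->
  proj e len (subpath r k j) v = rr (clamp j (j + k.-1) (spine_idx v)).
Proof.
move=> k_gt0 jk; rewrite subpath_spine //; set cl := clamp _ _ _.
have cl_window : (j <= cl <= j + k.-1)%N by rewrite /cl /clamp; lia.
have window_ne : [seq rr t | t <- iota j k] != [::].
  by rewrite -size_eq0 size_map size_iota -lt0n.
have [/mapP [a]] := projP v window_ne.
have cl_in : rr cl \in [seq rr t | t <- iota j k] by apply: map_f; rewrite mem_iota; lia.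
rewrite mem_iota => a_window -> /(_ _ cl_in).
rewrite (dist_via_spine v a) ?(dist_via_spine v cl) ?lerD2l; try lia.
by move/clamp_unique_nearest => ->; rewrite ?spine_idx_le //; lia.
Qed.

Lemma plen_subpath k j : (0 < k)%N -> (j + k <= n.+1)%N ->
  plen e len (subpath r k j) = prefix_len (j + k.-1) - prefix_len j.
Proof.
case: k => // k _ jk; rewrite subpath_spine //= (last_map (fun t => rr t)).
have -> : last j (iota j.+1 k) = (j + k)%N.
  by elim: k j jk => [|k IH] j jk /=; rewrite ?addn0 // IH ?addnS //; lia.
by rewrite dist_spine 1?distrC ?ger0_norm ?subr_ge0 ?prefix_len_le //; lia.
Qed.

Lemma T2bar_subpath w vt k j : (0 < k)%N -> (j + k <= n.+1)%N ->
  T2bar e len w vt (subpath r k j) = vt^-1 * window_cost w spine_idx prefix_len k.-1 j.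
Proof.
move=> k_gt0 jk; rewrite /T2bar /window_cost; congr (_ * _); apply: eq_bigr => v _.
have window_uniq : uniq (subpath r k j) by rewrite take_uniq // drop_uniq // spine_uniq.
have proj_in u : proj e len (subpath r k j) u \in subpath r k j.
  by rewrite proj_subpath // subpath_spine //; apply: map_f; rewrite mem_iota /clamp; lia.
rewrite dbarE // mulr_sumr; apply: eq_bigr => u _.
by rewrite !proj_subpath // dist_spine /clamp; [ring | lia | lia].
Qed.

End Spine.

End Tree.

Theorem corollary4 (R : realFieldType) (T : finType) (e : rel T) (len : T -> T -> R)
  (w : T -> R) (vt G l : R) (r : seq T) (k : nat) :
  is_tree e -> pos_lengths e len ->
  (forall v, 0 <= w v) -> \sum_(v : T) w v = 1 ->
  0 < vt -> 0 <= G ->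
  (exists (x : T) (p : seq T), r = x :: p /\ simple_path e x p) ->
  (2 <= k)%N -> (k <= size r)%N ->
  (forall j, (j < size r - k + 1)%N -> plen e len (subpath r k j) = l) ->
  forall j, (j < size r - k + 1)%N ->
    Num.min (Sbar e len w vt G (subpath r k 0))
            (Sbar e len w vt G (subpath r k (size r - k)))
      <= Sbar e len w vt G (subpath r k j).
Proof.
move=> tree lengths w_ge0 w_sum vt_gt0 _ [x [p [-> spine]]] k_ge2 k_le window_len.
move=> j j_le.
rewrite /= in k_le j_le window_len *.
have last_start : ((size p).+1 - k = size p - k.-1)%N by lia.
have prefix_mono t : (t < size p)%N -> prefix_len len x p t <= prefix_len len x p t.+1.
  exact: (prefix_len_le _ _ lengths _ _ spine).
have window_prefix i : (i + k.-1 <= size p)%N ->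
    prefix_len len x p (i + k.-1) - prefix_len len x p i = l.
  by move=> ik; rewrite -(plen_subpath _ _ tree lengths _ _ spine) ?window_len //; lia.
have j_window : (j <= size p - k.-1)%N by lia.
have := window_cost_min_ends w (spine_idx e len x p) _ _ _ _
  prefix_mono w_sum w_ge0 window_prefix _ j_window.
rewrite /Sbar last_start !(T2bar_subpath _ _ tree lengths _ _ spine); try lia.
rewrite !ge_min => /orP [] cost_le; apply/orP; [left | right];
  by rewrite lerD2r ler_wpM2l // invr_ge0 ltW.
Qed.
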